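(* Let $n\le k$ and let $\hat C$ be an estimator that takes $n$ balls drawn uniformly at random without replacement from a $k$-ball urn and, for every $k$-ball urn, has estimation error $|\hat C-C|$ less than $\Delta$ with probability at least $1-\delta$. Let $P$ be any discrete distribution whose nonzero probabilities are all at least $1/\ell$, and let $S(P)$ be its support size. Then applying $\hat C$ to $n$ i.i.d. samples from $P$ yields $|\hat C-S(P)|\le2\Delta$ with probability at least $1-\delta-\binom{\ell}{\Delta}\big(1-\frac{\Delta}{\ell}\big)^k$.
   Context: For an urn of $k$ colored balls, $C$ denotes its number of distinct colors. $\Delta$ and $\ell$ are positive integers. *)

From mathcomp Require Import all_boot all_order all_algebra.
Set Implicit Arguments. Unset Strict Implicit. Unset Printing Implicit Defensive.
Import Order.TTheory GRing.Theory Num.Theory.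
Local Open Scope ring_scope.

Section Defs.
Variables (R : realFieldType) (T : finType).

(* An urn of k balls: the colour of each ball. *)
Definition ncolors (k : nat) (u : {ffun 'I_k -> T}) : nat :=
  #|[set u i | i : 'I_k]|.

Definition draw (n k : nat) (u : {ffun 'I_k -> T}) (f : {ffun 'I_n -> 'I_k})
  : {ffun 'I_n -> T} := [ffun i => u (f i)].

(* Probability that an event E on the (ordered) sample holds when n balls are
   drawn uniformly at random without replacement from the urn u:
   the draw is a uniformly random injection 'I_n -> 'I_k. *)
Definition wor_prob (n k : nat) (E : {ffun 'I_n -> T} -> bool)
  (u : {ffun 'I_k -> T}) : R :=
  (#|[set f : {ffun 'I_n -> 'I_k} | injectiveb f && E (draw u f)]|%:R)
  / (#|[set f : {ffun 'I_n -> 'I_k} | injectiveb f]|%:R).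

Definition iid_prob (n : nat) (P : {ffun T -> R}) (E : {ffun 'I_n -> T} -> bool) : R :=
  \sum_(s : {ffun 'I_n -> T} | E s) \prod_(i < n) P (s i).

Definition supp_size (P : {ffun T -> R}) : nat := #|[set x | P x != 0]|.

End Defs.

Arguments wor_prob {R T n k} E u.
Arguments iid_prob {R T n} P E.
Arguments supp_size {R T} P.
Arguments ncolors {T k} u.

From mathcomp Require Import all_boot all_order all_algebra.
From mathcomp Require Import lra.
Set Implicit Arguments. Unset Strict Implicit. Unset Printing Implicit Defensive.
Import Order.TTheory GRing.Theory Num.Theory.
Local Open Scope ring_scope.

(* Fill the k-ball urn itself with k i.i.d. samples from P, then draw n balls
   from it without replacement: the outcome is again n i.i.d. samples from P.
   The urn misses Delta or more points of the support only if it avoids some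
   Delta-subset of the support; each such subset has mass at least Delta/l, so
   by a union bound this happens with probability at most
   C(l, Delta) (1 - Delta/l)^k.  Otherwise its colour count C satisfies
   S - Delta < C <= S, and an estimate within Delta of C is within 2 Delta of S. *)

Lemma prodr_nat_bool (R : comPzSemiRingType) (I : finType) (b : I -> bool) :
  \prod_i ((b i)%:R : R) = [forall i, b i]%:R.
Proof.
have [/forallP bT | /forallPn [i bFi]] := boolP [forall i, b i].
  by rewrite big1 // => i _; rewrite bT.
by rewrite (bigD1 i) //= (negbTE bFi) mul0r.
Qed.

Lemma prod_pick_preimage (R : comPzSemiRingType) (I J : finType) (f : I -> J)
    (H : J -> option I -> R) :
  injective f -> (forall j, H j None = 1) ->
  \prod_j H j [pick i | f i == j] = \prod_i H (f i) (Some i).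
Proof.
move=> f_inj H_None.
have pick_f i : [pick i' | f i' == f i] = Some i.
  by case: pickP => [i' /eqP/f_inj -> // | /(_ i)]; rewrite eqxx.
rewrite (bigID (mem [set f i | i in [set: I]])) /=.
rewrite [X in _ * X]big1 ?mulr1; last first.
  move=> j j_notin; case: pickP => [i /eqP fi_j | _]; last exact: H_None.
  by move: j_notin; rewrite -fi_j imset_f ?inE.
rewrite big_imset /=; last by move=> i i' _ _ /f_inj.
by apply: eq_big => [i | i _]; rewrite ?inE ?pick_f.
Qed.

Section ProductMass.
Variables (R : comPzSemiRingType) (T : finType) (P : T -> R).

Definition iid_mass (J : finType) (u : {ffun J -> T}) : R := \prod_j P (u j).

Lemma sum_iid_mass_avoid (J : finType) (D : {pred T}) :
  \sum_(u : {ffun J -> T}) iid_mass u * [forall j, u j \notin D]%:R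
    = (\sum_(x | x \notin D) P x) ^+ #|J|.
Proof.
transitivity (\prod_(j : J) \sum_x P x * (x \notin D)%:R).
  rewrite bigA_distr_bigA /=; apply: eq_bigr => u _.
  by rewrite /iid_mass -prodr_nat_bool -big_split.
rewrite prodr_const [in RHS]big_mkcond /=; congr (_ ^+ _); apply: eq_bigr => x _.
by case: (x \notin D); rewrite ?mulr1 ?mulr0.
Qed.

Hypothesis P_sum1 : \sum_x P x = 1.

Lemma sum_iid_mass (J : finType) : \sum_(u : {ffun J -> T}) iid_mass u = 1.
Proof.
transitivity
  (\sum_(u : {ffun J -> T}) iid_mass u * [forall j, u j \notin pred0]%:R).
  by apply: eq_bigr => u _; rewrite (_ : [forall j, _]) ?mulr1 //; apply/forallP.
by rewrite sum_iid_mass_avoid (eq_bigl xpredT) // P_sum1 expr1n.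
Qed.

Lemma sum_iid_mass_marginal (I J : finType) (f : I -> J) (t : {ffun I -> T}) :
  injective f ->
  \sum_(u : {ffun J -> T}) iid_mass u * ([ffun i => u (f i)] == t)%:R
    = iid_mass t.
Proof.
move=> f_inj.
pose h j x : R := if [pick i | f i == j] is Some i then (x == t i)%:R else 1.
have marginal_eq (u : {ffun J -> T}) :
    (([ffun i => u (f i)] == t)%:R : R) = \prod_j h j (u j).
  rewrite (prod_pick_preimage (H := fun (j : J) (o : option I) =>
    if o is Some i then ((u j == t i)%:R : R) else 1) f_inj) //.
  rewrite prodr_nat_bool; congr ((nat_of_bool _)%:R).
  apply/eqP/forallP => [<- i | ut]; first by rewrite ffunE.
  by apply/ffunP => i; rewrite ffunE; apply/eqP.
under eq_bigr do rewrite marginal_eq -big_split.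
rewrite -(bigA_distr_bigA (fun j x => P x * h j x)) /h /=.
rewrite (prod_pick_preimage (H := fun (j : J) (o : option I) =>
  \sum_x P x * if o is Some i then (x == t i)%:R else 1) f_inj); last first.
  by move=> j; under eq_bigr do rewrite mulr1.
apply: eq_bigr => i _; rewrite (bigD1 (t i)) //= eqxx mulr1.
by rewrite big1 ?addr0 // => x /negbTE ->; rewrite mulr0.
Qed.

Lemma sum_iid_mass_comp (I J : finType) (f : I -> J) (g : {ffun I -> T} -> R) :
  injective f ->
  \sum_(u : {ffun J -> T}) iid_mass u * g [ffun i => u (f i)]
    = \sum_(t : {ffun I -> T}) iid_mass t * g t.
Proof.
move=> f_inj.
have g_eq u : g [ffun i => u (f i)]
    = \sum_(t : {ffun I -> T}) ([ffun i => u (f i)] == t)%:R * g t.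
  rewrite (bigD1 [ffun i => u (f i)]) //= eqxx mul1r big1 ?addr0 // => t.
  by rewrite eq_sym => /negbTE ->; rewrite mul0r.
under eq_bigr do rewrite g_eq mulr_sumr.
rewrite exchange_big /=; apply: eq_bigr => t _.
rewrite -(sum_iid_mass_marginal t f_inj) mulr_suml; apply: eq_bigr => u _.
by rewrite mulrA.
Qed.

End ProductMass.

Section WithoutReplacement.
Variables (R : realFieldType) (T : finType) (n k : nat).
Hypothesis n_le_k : (n <= k)%N.

Lemma card_inj_ffun_gt0 : (0 < #|[set f : {ffun 'I_n -> 'I_k} | injectiveb f]|)%N.
Proof. by rewrite card_inj_ffuns !card_ord ffact_gt0. Qed.

Lemma wor_probE (E : {ffun 'I_n -> T} -> bool) (u : {ffun 'I_k -> T}) :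
  wor_prob E u = (\sum_(f : {ffun 'I_n -> 'I_k} | injectiveb f) (E (draw u f))%:R)
                   / #|[set f : {ffun 'I_n -> 'I_k} | injectiveb f]|%:R :> R.
Proof.
rewrite /wor_prob -sum1_card natr_sum; congr (_ / _).
rewrite [LHS]big_mkcond [RHS]big_mkcond; apply: eq_bigr => f _.
by rewrite inE; case: (injectiveb f); case: (E _).
Qed.

Lemma wor_prob_ge0 (E : {ffun 'I_n -> T} -> bool) (u : {ffun 'I_k -> T}) :
  0 <= wor_prob E u :> R.
Proof. by rewrite /wor_prob divr_ge0 ?ler0n. Qed.

Lemma wor_prob_le (E F : {ffun 'I_n -> T} -> bool) (u : {ffun 'I_k -> T}) :
  (forall s, E s -> F s) -> wor_prob E u <= wor_prob F u :> R.
Proof.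
move=> EF; rewrite /wor_prob ler_wpM2r ?invr_ge0 ?ler0n // ler_nat.
by apply/subset_leq_card/subsetP => f; rewrite !inE => /andP[-> /EF].
Qed.

Lemma wor_prob_le1 (E : {ffun 'I_n -> T} -> bool) (u : {ffun 'I_k -> T}) :
  wor_prob E u <= 1 :> R.
Proof.
rewrite /wor_prob; set N := #|[set f : {ffun 'I_n -> 'I_k} | injectiveb f]|.
have [-> | N_gt0] := posnP N; first by rewrite invr0 mulr0 ler01.
rewrite ler_pdivrMr ?ltr0n // mul1r ler_nat.
by apply/subset_leq_card/subsetP => f; rewrite !inE => /andP[].
Qed.

Lemma iid_probE (P : {ffun T -> R}) (E : {ffun 'I_n -> T} -> bool) :
  iid_prob P E = \sum_(s : {ffun 'I_n -> T}) iid_mass P s * (E s)%:R.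
Proof.
rewrite /iid_prob big_mkcond /=; apply: eq_bigr => s _.
by case: (E s); rewrite ?mulr1 ?mulr0.
Qed.

Lemma iid_prob_wor_mix (P : {ffun T -> R}) (E : {ffun 'I_n -> T} -> bool) :
  \sum_x P x = 1 ->
  iid_prob P E = \sum_(u : {ffun 'I_k -> T}) iid_mass P u * wor_prob E u.
Proof.
move=> P_sum1; set N := #|[set f : {ffun 'I_n -> 'I_k} | injectiveb f]|.
have N_neq0 : N%:R != 0 :> R by rewrite pnatr_eq0 -lt0n card_inj_ffun_gt0.
under eq_bigr do rewrite wor_probE mulrA mulr_sumr.
rewrite -mulr_suml exchange_big.
under eq_bigr => f /injectiveP f_inj.
  rewrite (sum_iid_mass_comp P_sum1 (fun s => (E s)%:R) f_inj) -iid_probE.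
  over.
have card_inj : #|[pred f : {ffun 'I_n -> 'I_k} | injectiveb f]| = N.
  by apply: eq_card => f; rewrite inE.
by rewrite sumr_const card_inj -/N -[_ *+ N]mulr_natr mulfK.
Qed.

End WithoutReplacement.

Section SmallMasses.
Variables (R : realFieldType) (T : finType) (P : {ffun T -> R}) (l : nat).
Hypotheses (P_ge0 : forall x, 0 <= P x) (P_sum1 : \sum_x P x = 1).
Hypotheses (l_gt0 : (0 < l)%N) (P_min : forall x, P x != 0 -> l%:R^-1 <= P x).

Local Notation supp := [set x | P x != 0].

Lemma iid_mass_ge0 (J : finType) (u : {ffun J -> T}) : 0 <= iid_mass P u.
Proof. exact: prodr_ge0. Qed.

Lemma mass_ge_card (D : {set T}) :
  D \subset supp -> #|D|%:R / l%:R <= \sum_(x in D) P x.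
Proof.
move=> /subsetP D_supp; rewrite mulr_natl -sumr_const.
by apply: ler_sum => x /D_supp; rewrite inE; apply: P_min.
Qed.

Lemma supp_size_le : (supp_size P <= l)%N.
Proof.
suff : (supp_size P)%:R / l%:R <= 1 :> R.
  by rewrite ler_pdivrMr ?ltr0n // mul1r ler_nat.
rewrite -[X in _ <= X]P_sum1 (bigID (mem supp)) /=.
apply: le_trans (mass_ge_card (subxx _)) _.
by rewrite lerDl sumr_ge0.
Qed.

Lemma ncolors_le_supp_size k (u : {ffun 'I_k -> T}) :
  iid_mass P u != 0 -> (ncolors u <= supp_size P)%N.
Proof.
move/prodf_neq0 => u_supp; apply/subset_leq_card/subsetP => x /imsetP[j _ ->].
by rewrite inE u_supp.
Qed.

Lemma avoided_subset_exists k d (u : {ffun 'I_k -> T}) :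
  iid_mass P u != 0 -> (ncolors u + d <= supp_size P)%N ->
  exists2 D : {set T}, D \in [set D : {set T} | D \subset supp & #|D| == d]
           & [forall j, u j \notin D].
Proof.
move=> u_mass few_colors; set im := [set u j | j : 'I_k].
have im_supp : im \subset supp.
  by apply/subsetP => x /imsetP[j _ ->]; rewrite inE (prodf_neq0 _ _ u_mass).
have : (0 < #|[set D : {set T} | D \subset supp :\: im & #|D| == d]|)%N.
  rewrite cards_draws bin_gt0 cardsD (setIidPr im_supp).
  by rewrite leq_subRL ?subset_leq_card // addnC.
case/card_gt0P => D; rewrite inE => /andP[D_sub D_card].
exists D; first by rewrite inE D_card (subset_trans D_sub) ?subsetDl.
apply/forallP => j; apply/negP => /(subsetP D_sub).
by rewrite inE imset_f.
Qed.

Lemma sum_iid_mass_avoid_le k (D : {set T}) :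
  D \subset supp ->
  \sum_(u : {ffun 'I_k -> T}) iid_mass P u * [forall j, u j \notin D]%:R
    <= (1 - #|D|%:R / l%:R) ^+ k.
Proof.
move=> D_supp; rewrite sum_iid_mass_avoid card_ord.
have split_mass : \sum_(x | x \notin D) P x = 1 - \sum_(x in D) P x.
  by rewrite -P_sum1 [\sum_x _](bigID (mem D)) /= addrAC subrr add0r.
have := mass_ge_card D_supp.
have : 0 <= \sum_(x | x \notin D) P x by apply: sumr_ge0.
rewrite split_mass => ? ?; apply: lerXn2r; rewrite ?nnegrE; lra.
Qed.

Lemma few_colors_mass_le k d :
  \sum_(u : {ffun 'I_k -> T} | (ncolors u + d <= supp_size P)%N) iid_mass P u
    <= 'C(l, d)%:R * (1 - d%:R / l%:R) ^+ k.
Proof.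
set Ds := [set D : {set T} | D \subset supp & #|D| == d].
apply: (@le_trans _ _
  (\sum_(D in Ds) \sum_(u : {ffun 'I_k -> T})
      iid_mass P u * [forall j, u j \notin D]%:R)).
  rewrite exchange_big /= big_mkcond /=; apply: ler_sum => u _.
  rewrite -mulr_sumr; case: ifP => few_colors; last first.
    by rewrite mulr_ge0 ?iid_mass_ge0 ?sumr_ge0.
  have [-> | u_mass] := eqVneq (iid_mass P u) 0; first by rewrite mul0r.
  have [D D_in u_avoids] := avoided_subset_exists u_mass few_colors.
  rewrite -[X in X <= _]mulr1 ler_wpM2l ?iid_mass_ge0 //.
  by rewrite (bigD1 D) //= u_avoids lerDl sumr_ge0.
apply: (@le_trans _ _ (\sum_(D in Ds) (1 - d%:R / l%:R) ^+ k)).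
  apply: ler_sum => D; rewrite inE => /andP[D_supp /eqP <-].
  exact: sum_iid_mass_avoid_le.
rewrite sumr_const cards_draws -[_ *+ 'C(_, _)]mulr_natl.
have [d_le_l | l_lt_d] := leqP d l; last first.
  have S_lt_d : (supp_size P < d)%N := leq_ltn_trans supp_size_le l_lt_d.
  by rewrite !bin_small ?mul0r.
rewrite ler_wpM2r ?ler_nat ?leq_bin2l ?supp_size_le // exprn_ge0 //.
by rewrite subr_ge0 ler_pdivrMr ?ltr0n // mul1r ler_nat.
Qed.

Lemma wor_prob_supp_size_estimate n k (u : {ffun 'I_k -> T})
    (Chat : {ffun 'I_n -> T} -> R) (Delta : nat) (delta : R) :
  iid_mass P u != 0 ->
  1 - delta <= wor_prob (fun s => `|Chat s - (ncolors u)%:R| < Delta%:R) u ->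
  1 - delta - (ncolors u + Delta <= supp_size P)%N%:R
    <= wor_prob (fun s => `|Chat s - (supp_size P)%:R| <= 2 * Delta%:R) u.
Proof.
move=> u_mass Chat_ok; case: leqP => [_ | many_colors]; rewrite /= ?subr0.
  (* The claim is [- delta <= _], and the hypothesis with [wor_prob <= 1]
     yields [0 <= delta]. *)
  have := wor_prob_le1 R (fun s => `|Chat s - (ncolors u)%:R| < Delta%:R) u.
  have := wor_prob_ge0 R (fun s => `|Chat s - (supp_size P)%:R| <= 2 * Delta%:R) u.
  lra.
apply: (le_trans Chat_ok); apply: wor_prob_le => s close.
have C_le_S := ncolors_le_supp_size u_mass.
have : `|(ncolors u)%:R - (supp_size P)%:R| < Delta%:R :> R.
  by rewrite distrC ger0_norm ?subr_ge0 ?ler_nat // ltrBlDr -natrD ltr_nat addnC.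
move: (ler_distD ((ncolors u)%:R : R) (Chat s) (supp_size P)%:R) close; lra.
Qed.

End SmallMasses.

Theorem lemma5 (R : realFieldType) (T : finType) (n k Delta l : nat) (delta : R)
  (Chat : {ffun 'I_n -> T} -> R) :
  (n <= k)%N -> (0 < Delta)%N -> (0 < l)%N ->
  (forall u : {ffun 'I_k -> T},
     1 - delta <= wor_prob (fun s => `|Chat s - (ncolors u)%:R| < Delta%:R) u) ->
  forall P : {ffun T -> R},
    (forall x, 0 <= P x) -> \sum_x P x = 1 ->
    (forall x, P x != 0 -> l%:R^-1 <= P x) ->
    1 - delta - 'C(l, Delta)%:R * (1 - Delta%:R / l%:R) ^+ k
      <= iid_prob P (fun s => `|Chat s - (supp_size P)%:R| <= 2 * Delta%:R).
Proof.
move=> n_le_k _ l_gt0 Chat_ok P P_ge0 P_sum1 P_min.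
pose few_colors (u : {ffun 'I_k -> T}) := (ncolors u + Delta <= supp_size P)%N.
rewrite (iid_prob_wor_mix n_le_k _ P_sum1).
apply: (@le_trans _ _
  (\sum_u iid_mass P u * (1 - delta - (few_colors u)%:R))); last first.
  apply: ler_sum => u _.
  have [-> | u_mass] := eqVneq (iid_mass P u) 0; first by rewrite !mul0r.
  rewrite ler_wpM2l ?iid_mass_ge0 //.
  exact: wor_prob_supp_size_estimate.
have -> : \sum_u iid_mass P u * (1 - delta - (few_colors u)%:R)
    = (1 - delta) * \sum_(u : {ffun 'I_k -> T}) iid_mass P u
      - \sum_(u | few_colors u) iid_mass P u.
  rewrite [\sum_(u | few_colors u) _]big_mkcond mulr_sumr -sumrB.
  apply: eq_bigr => u _.
  by rewrite mulrBr mulrC; case: (few_colors u); rewrite /= ?mulr1 ?mulr0.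
by rewrite sum_iid_mass // mulr1 lerB // few_colors_mass_le.
Qed.
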